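(* Let $U\in\mathcal C_n$ be a Clifford unitary with tableau $\begin{bmatrix}A&B\\C&D\end{bmatrix}$. Let $z\in\mathrm{supp}(U|0\rangle^{\otimes n})$ and let $r\in\{0,1\}^n$ be uniformly random. Then $rC\oplus z\in\mathrm{supp}(U|0\rangle^{\otimes n})$, and $rC\oplus z$ is a uniformly random element of $\mathrm{supp}(U|0\rangle^{\otimes n})$.
   Context: $\mathcal C_n$ is the $n$-qubit Clifford group (unitaries $U$ with $U\mathcal P_nU^\dagger=\mathcal P_n$, $\mathcal P_n$ the Pauli group). For $a\in\mathbb F_2^n$, $X^a=X^{a_1}\otimes\cdots\otimes X^{a_n}$ and similarly $Z^a$; $e_i$ is the $i$-th standard basis vector. The tableau of $U$ (ignoring signs) is the $2n\times 2n$ binary matrix $\begin{bmatrix}A&B\\C&D\end{bmatrix}$ with $A,B,C,D\in\mathbb F_2^{n\times n}$, where the $i$-th row of $A$ (resp. $B$) is the $X$-part (resp. $Z$-part) of the Pauli string $UX^{e_i}U^\dagger=\pm X^{a}Z^{b}$ (up to phase), and the $i$-th row of $C$ (resp. $D$) is the $X$-part (resp. $Z$-part) of $UZ^{e_i}U^\dagger$. For $|\psi\rangle=\sum_x\alpha_x|x\rangle$, $\mathrm{supp}(|\psi\rangle)=\{x:\alpha_x\ne0\}$. Here $rC$ is the row vector product over $\mathbb F_2$. *)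

(* Complex scalars: an arbitrary numClosedFieldType C
   (e.g. algC, or complex R over a real closed field), with conjugation z^* and 'i. *)
From HB Require Import structures.
From mathcomp Require Import all_boot all_order all_algebra.
Set Implicit Arguments. Unset Strict Implicit. Unset Printing Implicit Defensive.
Import Order.TTheory GRing.Theory Num.Theory.
Local Open Scope ring_scope.

Definition bits (n : nat) := 'rV['F_2]_n.

Definition ebit (n : nat) (i : 'I_n) : bits n := delta_mx 0 i.

Definition dotb (n : nat) (b x : bits n) : 'F_2 := (b *m x^T) 0 0.

(* n-qubit operators: square complex matrices indexed by the computational
   basis {|x> : x in F_2^n} (via enum_val / enum_rank), of size #|bits n| = 2^n. *)
Definition Op (C : numClosedFieldType) (n : nat) := 'M[C]_#|{: bits n}|.

Definition entry (C : numClosedFieldType) n (M : Op C n) (y x : bits n) : C :=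
  M (enum_rank y) (enum_rank x).

Definition adj (C : numClosedFieldType) n (M : Op C n) : Op C n :=
  (map_mx (@Num.conj C) M)^T.

Definition unitary (C : numClosedFieldType) n (U : Op C n) : Prop :=
  U *m adj U = 1%:M /\ adj U *m U = 1%:M.

(* The Pauli string X^a Z^b : |x> |-> (-1)^{b.x} |x + a>. *)
Definition pauliXZ (C : numClosedFieldType) n (a b : bits n) : Op C n :=
  \matrix_(i, j)
    let y := enum_val i in let x := enum_val j in
    ((y == x + a)%:R * (if dotb b x == 0 then 1 else -1)).

Definition pauli_group (C : numClosedFieldType) n (P : Op C n) : Prop :=
  exists (k : nat) (a b : bits n), P = 'i ^+ k *: pauliXZ C a b.

Definition clifford (C : numClosedFieldType) n (U : Op C n) : Prop :=
  unitary U /\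
  (forall P : Op C n, pauli_group P -> pauli_group (U *m P *m adj U)) /\
  (forall Q : Op C n, pauli_group Q ->
      exists2 P : Op C n, pauli_group P & Q = U *m P *m adj U).

(* [A B; C D] is the (sign-free) tableau of U: row i of A/B is the X-/Z-part of
   U X^{e_i} U^dagger, row i of C/D that of U Z^{e_i} U^dagger (up to phase). *)
Definition tableau (C : numClosedFieldType) n (U : Op C n)
    (TA TB TC TD : 'M['F_2]_n) : Prop :=
  forall i : 'I_n,
    (exists k : nat, U *m pauliXZ C (ebit i) 0 *m adj U
                     = 'i ^+ k *: pauliXZ C (row i TA) (row i TB)) /\
    (exists k : nat, U *m pauliXZ C 0 (ebit i) *m adj U
                     = 'i ^+ k *: pauliXZ C (row i TC) (row i TD)).

Definition supp0 (C : numClosedFieldType) n (U : Op C n) : {set bits n} :=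
  [set x : bits n | entry U x 0 != 0].

From HB Require Import structures.
From mathcomp Require Import all_boot all_order all_algebra.
Set Implicit Arguments. Unset Strict Implicit. Unset Printing Implicit Defensive.
Import Order.TTheory GRing.Theory Num.Theory.
Local Open Scope ring_scope.

(* Since Z_i fixes |0>, the state U|0> is fixed by U Z_i U^dagger, which is
   X^{c_i} Z^{d_i} up to a phase (c_i the i-th row of C); so <y|U|0> and
   <y - c_i|U|0> vanish together, and supp(U|0>) is closed under translation by
   the row space of C.  Conversely |0><0| = prod_i (1 + Z_i)/2, hence
   U|0><0|U^dagger = prod_i (1 + U Z_i U^dagger)/2 has nonzero entries <y|.|x>
   only for y - x in the row space of C; its (y, z) entry is
   <y|U|0> conj(<z|U|0>).  Thus supp(U|0>) = z + rowspace(C) is the image of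
   r |-> rC + z, all of whose fibres are translates of ker C. *)

Lemma card_fibers_const (T S : finType) (f : T -> S) (A : {set S}) (k : nat) :
    (forall x, f x \in A) -> (forall y, y \in A -> #|[set x | f x == y]| = k) ->
  (#|A| * k)%N = #|T|.
Proof.
move=> fA fibA; rewrite -[#|T|]sum1_card (partition_big f (mem A)) //=.
rewrite -sum_nat_const; apply: eq_bigr => y /fibA <-.
by rewrite -sum1_card; apply: eq_bigl => x; rewrite inE.
Qed.

Lemma card_affine_fiber (R : finNzRingType) m n (M : 'M[R]_(m, n))
    (z y : 'rV_n) (r0 : 'rV_m) :
  y - z = r0 *m M ->
  #|[set r | r *m M + z == y]| = #|[set r : 'rV_m | r *m M == 0]|.
Proof.
move=> yzE; rewrite -(card_preimset _ (addIr r0)); apply: eq_card => r.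
by rewrite !inE mulmxDl -yzE -addrA subrK -subr_eq0 addrK.
Qed.

Lemma card_bits n : #|{: bits n}| = (2 ^ n)%N.
Proof. by rewrite card_mx card_Fp // mul1n. Qed.

Lemma F2_cases (x : 'F_2) : x = 0 \/ x = 1.
Proof. by case: x => [[|[|m]] lt_m2] //; [left | right]; apply/val_inj. Qed.

Lemma mulmx_delta_mulmxE (R : pzSemiRingType) m p q r (A : 'M[R]_(m, p))
    (B : 'M[R]_(q, r)) (k : 'I_p) (l : 'I_q) i j :
  (A *m delta_mx k l *m B) i j = A i k * B l j.
Proof.
by rewrite -(mul_delta_mx (0 : 'I_1)) mulmxA -colE -mulmxA -rowE !mxE big_ord1 !mxE.
Qed.

Section PauliAction.
Variables (C : numClosedFieldType) (n : nat).
Implicit Types (a b x : bits n) (M : Op C n).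

Definition pauli_sign b x : C := if dotb b x == 0 then 1 else -1.

Lemma pauli_sign_neq0 b x : pauli_sign b x != 0.
Proof. by rewrite /pauli_sign; case: ifP; rewrite ?oppr_eq0 oner_eq0. Qed.

Lemma pauli_sign0 b : pauli_sign b 0 = 1.
Proof. by rewrite /pauli_sign /dotb trmx0 mulmx0 mxE eqxx. Qed.

Lemma pauli_sign_ebit (i : 'I_n) x :
  pauli_sign (ebit i) x = if x 0 i == 0 then 1 else -1.
Proof. by rewrite /pauli_sign /dotb /ebit -rowE !mxE. Qed.

Lemma pauliXZ_mull a b M i j :
  (pauliXZ C a b *m M) i j
  = pauli_sign b (enum_val i - a) * M (enum_rank (enum_val i - a)) j.
Proof.
rewrite !mxE (bigD1 (enum_rank (enum_val i - a))) //= mxE enum_rankK /= subrK eqxx mul1r.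
rewrite big1 ?addr0 // => k k_neq; rewrite mxE /=.
case: eqP => [iE|_]; last by rewrite !mul0r.
by case/eqP: k_neq; rewrite iE addrK enum_valK.
Qed.

Lemma pauliXZ_mulr a b M i j :
  (M *m pauliXZ C a b) i j
  = M i (enum_rank (enum_val j + a)) * pauli_sign b (enum_val j).
Proof.
rewrite !mxE (bigD1 (enum_rank (enum_val j + a))) //= mxE enum_rankK /= eqxx mul1r.
rewrite big1 ?addr0 // => k k_neq; rewrite mxE /=.
case: eqP => [kE|_]; last by rewrite mul0r mulr0.
by case/eqP: k_neq; rewrite -kE enum_valK.
Qed.

End PauliAction.

Section ShiftSupport.
Variables (C : numClosedFieldType) (n m : nat) (V : 'M['F_2]_(m, n)).
Implicit Types M N : Op C n.

Definition shifts_within M :=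
  forall i j, M i j != 0 -> (enum_val i - enum_val j <= V)%MS.

Lemma shifts_within1 : shifts_within 1%:M.
Proof.
move=> i j; rewrite mxE; have [->|] := eqVneq i j; last by rewrite eqxx.
by rewrite subrr sub0mx.
Qed.

Lemma shifts_withinD M N : shifts_within M -> shifts_within N -> shifts_within (M + N).
Proof.
move=> sM sN i j; rewrite mxE; have [Mij0 | /sM //] := eqVneq (M i j) 0.
by rewrite Mij0 add0r => /sN.
Qed.

Lemma shifts_withinZ c M : shifts_within M -> shifts_within (c *: M).
Proof. by move=> sM i j; rewrite mxE mulf_eq0 negb_or => /andP[_ /sM]. Qed.

Lemma shifts_withinM M N : shifts_within M -> shifts_within N -> shifts_within (M *m N).
Proof.
move=> sM sN i j; rewrite mxE; apply: contraNT => ijV.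
rewrite big1 // => k _; apply: contraNeq ijV; rewrite mulf_eq0 negb_or.
by case/andP => /sM ikV /sN kjV; rewrite -[X in X - _](subrK (enum_val k)) -addrA addmx_sub.
Qed.

Lemma shifts_within_pauli (a b : bits n) :
  (a <= V)%MS -> shifts_within (pauliXZ C a b).
Proof.
move=> aV i j; rewrite mxE /=; have [->|] := eqVneq (enum_val i) (enum_val j + a).
  by rewrite addrC addKr.
by rewrite mul0r eqxx.
Qed.

End ShiftSupport.

Section ZeroProjector.
Variables (C : numClosedFieldType) (n : nat).

Definition zproj (s : seq 'I_n) : Op C n :=
  foldr (fun i M => (2%:R^-1 *: (1%:M + pauliXZ C 0 (ebit i))) *m M) 1%:M s.

Lemma zproj_entry s a b :
  zproj s a b = ((a == b) && all (fun i => enum_val a 0 i == 0) s)%:R.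
Proof.
elim: s => [|i s IHs] /=; first by rewrite mxE andbT.
rewrite -scalemxAl mulmxDl mul1mx mxE [in X in _ * X]mxE pauliXZ_mull.
rewrite subr0 enum_valK !IHs pauli_sign_ebit.
case: (enum_val a 0 i == 0) => /=; last by rewrite andbF mulN1r subrr mulr0.
rewrite mul1r; move: (_ && _)%:R => x.
by rewrite -mulr2n -(mulr_natl x 2) mulrA mulVf ?mul1r // pnatr_eq0.
Qed.

Lemma zproj_enum : zproj (enum 'I_n) = delta_mx (enum_rank 0) (enum_rank 0).
Proof.
apply/matrixP => a b; rewrite zproj_entry mxE.
have -> : all (fun i => enum_val a 0 i == 0) (enum 'I_n) = (enum_val a == 0).
  apply/allP/eqP => [a0|-> i _]; last by rewrite mxE.
  by apply/rowP => i; rewrite mxE; apply/eqP/a0; rewrite mem_enum.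
rewrite -(can2_eq enum_valK enum_rankK).
have [a0|_] := eqVneq (enum_val a) 0; last by rewrite andbF.
by rewrite -a0 enum_valK andbT eq_sym.
Qed.

End ZeroProjector.

Section Stabilizers.
Variables (C : numClosedFieldType) (n : nat) (U : Op C n).
Hypothesis unitaryU : unitary U.

(* Z^b |0> = |0>, so U|0> is an eigenvector of U Z^b U^dagger. *)
Lemma supp0_conj_pauliZ (b a d : bits n) (k : nat) :
    U *m pauliXZ C 0 b *m adj U = 'i ^+ k *: pauliXZ C a d ->
  forall y, (y - a \in supp0 U) = (y \in supp0 U).
Proof.
move=> conjZ y; have [_ UU1] := unitaryU.
have fixZ : U *m pauliXZ C 0 b = ('i ^+ k *: pauliXZ C a d) *m U.
  by rewrite -conjZ -mulmxA UU1 mulmx1.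
have := congr1 (fun M : Op C n => M (enum_rank y) (enum_rank 0)) fixZ.
rewrite /= pauliXZ_mulr -scalemxAl mxE pauliXZ_mull !enum_rankK addr0 pauli_sign0 mulr1.
rewrite !inE /entry => ->.
by rewrite !mulf_eq0 expf_eq0 (negbTE (neq0Ci C)) (negbTE (pauli_sign_neq0 C _ _)) andbF.
Qed.

Variables (TA TB TC TD : 'M['F_2]_n).
Hypothesis tableauU : tableau U TA TB TC TD.

Lemma supp0_subr_rowspace (r y : bits n) :
  (y - r *m TC \in supp0 U) = (y \in supp0 U).
Proof.
rewrite mulmx_sum_row; elim/big_rec: _ y => [|i v _ IHv] y; first by rewrite subr0.
have [_ [k conjZ]] := tableauU i.
case: (F2_cases (r 0 i)) => ->; first by rewrite scale0r add0r IHv.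
by rewrite scale1r opprD addrA IHv (supp0_conj_pauliZ conjZ).
Qed.

Lemma shifts_within_conj_zproj s : shifts_within TC (U *m zproj C s *m adj U).
Proof.
have [UU1 UU2] := unitaryU.
elim: s => [|i s IHs] /=; first by rewrite mulmx1 UU1; apply: shifts_within1.
have -> : forall H P : Op C n, U *m (H *m P) *m adj U
                               = (U *m H *m adj U) *m (U *m P *m adj U).
  by move=> H P; rewrite !mulmxA -(mulmxA _ (adj U) U) UU2 mulmx1.
apply: shifts_withinM IHs; have [_ [k conjZ]] := tableauU i.
rewrite -scalemxAr -scalemxAl mulmxDr mulmxDl mulmx1 UU1 conjZ.
apply/shifts_withinZ/shifts_withinD; first exact: shifts_within1.
by apply/shifts_withinZ/shifts_within_pauli; rewrite row_sub.
Qed.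

Lemma supp0_sub_coset y z :
  y \in supp0 U -> z \in supp0 U -> (y - z <= TC)%MS.
Proof.
rewrite !inE /entry => yU zU.
have := @shifts_within_conj_zproj (enum 'I_n) (enum_rank y) (enum_rank z).
rewrite !enum_rankK; apply.
by rewrite zproj_enum mulmx_delta_mulmxE /adj !mxE mulf_neq0 ?conjC_eq0.
Qed.

End Stabilizers.

Unset Implicit Arguments.

Theorem mainTheorem18 (C : numClosedFieldType) (n : nat) (U : Op C n)
    (TA TB TC TD : 'M['F_2]_n) :
  clifford U -> tableau U TA TB TC TD ->
  forall z : bits n, z \in supp0 U ->
    (forall r : bits n, r *m TC + z \in supp0 U) /\
    (forall y : bits n, y \in supp0 U ->
       (#|[set r : bits n | (r *m TC + z == y)%R]| * #|supp0 U| = 2 ^ n)%N).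
Proof.
move=> [unitaryU _] tableauU z zU.
have supp0_affine r : r *m TC + z \in supp0 U.
  by rewrite -[r *m TC]opprK -mulNmx addrC (supp0_subr_rowspace unitaryU tableauU).
have fiberE y : y \in supp0 U ->
    #|[set r | r *m TC + z == y]| = #|[set r : bits n | r *m TC == 0]|.
  move=> /(supp0_sub_coset unitaryU tableauU)/(_ zU)/submxP[r0].
  exact: card_affine_fiber.
split=> // y /fiberE ->.
by rewrite mulnC (card_fibers_const supp0_affine fiberE) card_bits.
Qed.
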